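(* Let $H$ be the graph consisting of two vertex-disjoint triangles $v_1v_2v_3$ and $w_1w_2w_3$ together with the edge $v_3w_1$. Let $n\ge 7$ and let $G$ be a graph with $n$ vertices obtained from $H$ by attaching $n-6$ pendant edges (new leaves) to vertices of $H$, such that $v_3$ is incident with at least one pendant edge, $w_1$ is incident with no pendant edge, and at least one vertex of $\{v_1,v_2,w_2,w_3\}$ is incident with a pendant edge. Then $\operatorname{avm}(G)>\operatorname{avm}(T_n^1(3,3))$.
   Context: $\operatorname{avm}(G)$ is the average of $|M|$ over all maximal matchings $M$ of $G$ (a matching is maximal if not properly contained in another matching). $T_n^1(3,3)$ is the graph obtained from $H$ by attaching $n-6$ pendant edges (new leaves) to $v_3$. *)

From mathcomp Require Import all_boot all_order all_algebra.
Set Implicit Arguments. Unset Strict Implicit. Unset Printing Implicit Defensive.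
Import GRing.Theory Num.Theory.

Section Matchings.
Variable V : finType.
Variable adj : rel V.

Definition is_edge (s : {set V}) : bool :=
  [exists x, exists y, [&& x != y, adj x y & s == [set x; y]]].

Definition matching (M : {set {set V}}) : bool :=
  [forall s in M, is_edge s] &&
  [forall s in M, forall t in M, (s != t) ==> [disjoint s & t]].

Definition maximal_matching (M : {set {set V}}) : bool :=
  matching M && [forall M' : {set {set V}}, (M \proper M') ==> ~~ matching M'].

(* average size of a maximal matching (there is always at least one) *)
Definition avm : rat :=
  ((\sum_(M : {set {set V}} | maximal_matching M) #|M|)%:R /
   (#|[set M : {set {set V}} | maximal_matching M]|)%:R)%R.
End Matchings.

Definition v1 : 'I_6 := @Ordinal 6 0 isT.
Definition v2 : 'I_6 := @Ordinal 6 1 isT.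
Definition v3 : 'I_6 := @Ordinal 6 2 isT.
Definition w1 : 'I_6 := @Ordinal 6 3 isT.
Definition w2 : 'I_6 := @Ordinal 6 4 isT.
Definition w3 : 'I_6 := @Ordinal 6 5 isT.

Definition H_edges : seq (nat * nat) :=
  [:: (0,1); (1,2); (0,2); (3,4); (4,5); (3,5); (2,3)]%N.

Definition H_adj (a b : 'I_6) : bool :=
  ((val a, val b) \in H_edges) || ((val b, val a) \in H_edges).

Definition pend_adj (k : nat) (f : 'I_k -> 'I_6) (x y : 'I_6 + 'I_k) : bool :=
  match x, y with
  | inl a, inl b => H_adj a b
  | inl a, inr i => f i == a
  | inr i, inl a => f i == a
  | inr _, inr _ => false
  end.

Arguments pend_adj {k} f x y.
Definition T1_33 (n : nat) : rel ('I_6 + 'I_(n - 6)) :=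
  pend_adj (fun _ : 'I_(n - 6) => v3).
Arguments T1_33 n x y : clear implicits.

From mathcomp Require Import all_boot all_order all_algebra.
From mathcomp Require Import ring.
Import GRing.Theory Num.Theory.
Set Implicit Arguments. Unset Strict Implicit. Unset Printing Implicit Defensive.

(* A maximal matching of H with pendant leaves consists of a matching E of H together with,
   for every vertex v of H that is not covered by E and carries a_v > 0 leaves, one of these
   leaves; such an E qualifies iff every edge of H has an end covered by E or carrying a leaf.
   Hence the number of maximal matchings is the sum over E of the products of the a_v over
   the uncovered leafy v, and the sum of their sizes weights each term by |E| plus the number
   of these v: polynomials in the a_v whose shape depends only on which a_v vanish.  For
   T_n^1(3,3) they are 3(n-6)+7 and 9(n-6)+15.  For each of the 15 possible zero patterns of
   (a_v1, a_v2, a_w2, a_w3) the cross-multiplied inequality, written in the variables a_v - 1,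
   has a difference with nonnegative coefficients and positive constant term. *)

Lemma disjointP (T : finType) (A B : {set T}) :
  reflect (forall x, x \in A -> x \notin B) [disjoint A & B].
Proof. by rewrite disjoint_subset; apply: (iffP subsetP) => H x /H; rewrite inE. Qed.

Section MatchingTheory.
Variables (V : finType) (adj : rel V).
Implicit Types (M : {set {set V}}) (s t : {set V}).

Lemma matchingP M : reflect
  ((forall s, s \in M -> is_edge adj s) /\ {in M &, forall s t, s != t -> [disjoint s & t]})
  (matching adj M).
Proof.
apply: (iffP andP) => [[/forall_inP edges /forall_inP disj]|[edges disj]].
  by split=> // s t M_s M_t; apply/implyP; move/forall_inP: (disj s M_s); apply.
split; apply/forall_inP => // s M_s; apply/forall_inP => t M_t; apply/implyP; exact: disj.
Qed.

Lemma maximal_matchingP M : reflect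
  (matching adj M /\ forall M', M \proper M' -> ~~ matching adj M') (maximal_matching adj M).
Proof.
apply: (iffP andP) => [[match_M /forallP max_M]|[match_M max_M]].
  by split=> // M'; apply/implyP.
by split=> //; apply/forallP => M'; apply/implyP/max_M.
Qed.

Lemma maximal_matching_exists : exists M, maximal_matching adj M.
Proof.
have match0 : matching adj set0 by apply/matchingP; split=> [s|s t]; rewrite inE.
case: (@arg_maxnP _ set0 (matching adj) (fun M => #|M|) match0) => M match_M max_M.
exists M; apply/maximal_matchingP; split=> // M' /proper_card.
by apply: contraL => /max_M; rewrite ltnNge negbK.
Qed.

Lemma matching_uniq M s t x :
  matching adj M -> s \in M -> t \in M -> x \in s -> x \in t -> s = t.
Proof.
case/matchingP => _ disj M_s M_t s_x t_x; apply/eqP/negPn/negP.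
by move=> /(disj s t M_s M_t) /disjointP /(_ x s_x); rewrite t_x.
Qed.

Lemma maximal_free_edge M s : maximal_matching adj M -> is_edge adj s ->
  {in M, forall t, [disjoint s & t]} -> s \in M.
Proof.
case/maximal_matchingP => /matchingP [edges disj] max_M edge_s free_s.
apply: contraT => notM_s.
have proper_sM : M \proper s |: M.
  by apply/properP; split; [exact: subsetUr | exists s; rewrite ?setU11].
rewrite -(negbTE (max_M _ proper_sM)); apply/matchingP; split=> [u /setU1P [->|/edges]//|u w].
case/setU1P => [->|M_u] /setU1P [->|M_w] neq_uw.
- by rewrite eqxx in neq_uw.
- exact: free_s.
- by rewrite disjoint_sym; apply: free_s.
- exact: disj.
Qed.

End MatchingTheory.

Definition hun (j : nat) : nat := (nth (0, 0) H_edges j).1.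
Definition hvn (j : nat) : nat := (nth (0, 0) H_edges j).2.

Lemma hun_lt j : hun j < 6.
Proof. by case: j => [|[|[|[|[|[|[|j]]]]]]] //; rewrite /hun nth_default. Qed.
Lemma hvn_lt j : hvn j < 6.
Proof. by case: j => [|[|[|[|[|[|[|j]]]]]]] //; rewrite /hvn nth_default. Qed.

Definition hu (j : 'I_7) : 'I_6 := Ordinal (hun_lt j).
Definition hv (j : 'I_7) : 'I_6 := Ordinal (hvn_lt j).

Lemma H_edge_ends (j : 'I_7) : (hu j != hv j) && H_adj (hu j) (hv j).
Proof. by case: j => [[|[|[|[|[|[|[|j]]]]]]] ?]. Qed.

Lemma H_adj_edge_ends (a b : 'I_6) : H_adj a b ->
  exists j : 'I_7, (hu j == a) && (hv j == b) || (hu j == b) && (hv j == a).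
Proof.
case: a => [[|[|[|[|[|[|a]]]]]] ?] //; case: b => [[|[|[|[|[|[|b]]]]]] ?] // _;
 by [ exists (@Ordinal 7 0 isT) | exists (@Ordinal 7 1 isT) | exists (@Ordinal 7 2 isT)
   | exists (@Ordinal 7 3 isT) | exists (@Ordinal 7 4 isT) | exists (@Ordinal 7 5 isT)
   | exists (@Ordinal 7 6 isT) ].
Qed.

Lemma H_ends_inj (j j' : 'I_7) :
  (hu j == hu j') && (hv j == hv j') || (hu j == hv j') && (hv j == hu j') -> j = j'.
Proof.
move=> ends_eq; apply: val_inj; move: ends_eq.
by case: j => [[|[|[|[|[|[|[|j]]]]]]] ?]; case: j' => [[|[|[|[|[|[|[|j']]]]]]] ?].
Qed.

(* A set of edges of H, as the indicator of their indices in H_edges; a tuple rather than a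
   {set 'I_7} so that concrete instances compute by simplification. *)
Definition bits7 := (bool * bool * bool * bool * bool * bool * bool)%type.

Definition bit (e : bits7) (j : nat) : bool :=
  let: (b0, b1, b2, b3, b4, b5, b6) := e in nth false [:: b0; b1; b2; b3; b4; b5; b6] j.

Lemma bits7_ext (e e' : bits7) : (forall j : 'I_7, bit e j = bit e' j) -> e = e'.
Proof.
case: e => [[[[[[b0 b1] b2] b3] b4] b5] b6]; case: e' => [[[[[[c0 c1] c2] c3] c4] c5] c6] eq_e.
move: (eq_e (@Ordinal 7 0 isT)) (eq_e (@Ordinal 7 1 isT)) (eq_e (@Ordinal 7 2 isT))
  (eq_e (@Ordinal 7 3 isT)) (eq_e (@Ordinal 7 4 isT)) (eq_e (@Ordinal 7 5 isT))
  (eq_e (@Ordinal 7 6 isT)).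
by rewrite /bit /= => -> -> -> -> -> -> ->.
Qed.

Definition all_bits7 : seq bits7 :=
  let tf := [:: true; false] in
  [seq (p, b) | p <- [seq (p, b) | p <- [seq (p, b) | p <- [seq (p, b) | p <-
   [seq (p, b) | p <- [seq (p, b) | p <- tf, b <- tf], b <- tf], b <- tf], b <- tf],
   b <- tf], b <- tf].

Lemma big_bits7 (F : bits7 -> nat) : \sum_(e : bits7) F e = \sum_(e <- all_bits7) F e.
Proof.
have big_pair (A B : finType) (G : A * B -> nat) :
    \sum_(p : A * B) G p = \sum_(a : A) \sum_(b : B) G (a, b).
  by rewrite pair_bigA; apply: eq_bigr => -[].
have big_bool_tf (G : bool -> nat) : \sum_(b : bool) G b = \sum_(b <- [:: true; false]) G b.
  by rewrite big_bool !big_cons big_nil addn0.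
rewrite !big_pair /all_bits7 !big_allpairs big_bool_tf; apply: eq_bigr => b0 _.
rewrite big_bool_tf; apply: eq_bigr => b1 _; rewrite big_bool_tf; apply: eq_bigr => b2 _.
rewrite big_bool_tf; apply: eq_bigr => b3 _; rewrite big_bool_tf; apply: eq_bigr => b4 _.
by rewrite big_bool_tf; apply: eq_bigr => b5 _; rewrite big_bool_tf.
Qed.

Definition covered (e : bits7) (v : nat) : bool :=
  has (fun j => bit e j && ((hun j == v) || (hvn j == v))) (iota 0 7).

Definition disjoint_ends (j j' : nat) : bool :=
  [&& hun j != hun j', hun j != hvn j', hvn j != hun j' & hvn j != hvn j'].

Definition H_matching (e : bits7) : bool :=
  all (fun j => all (fun j' => (j == j') || ~~ (bit e j && bit e j') || disjoint_ends j j')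
    (iota 0 7)) (iota 0 7).

Definition leafy (xs : seq nat) (v : nat) : bool := nth 0 xs v != 0.

Definition dominating (xs : seq nat) (e : bits7) : bool :=
  all (fun j => [|| covered e (hun j), covered e (hvn j), leafy xs (hun j) | leafy xs (hvn j)])
    (iota 0 7).

Definition admissible (xs : seq nat) (e : bits7) : bool := H_matching e && dominating xs e.

Lemma mem_iota7 (j : 'I_7) : val j \in iota 0 7.
Proof. by rewrite mem_iota ltn_ord. Qed.

Lemma coveredP e (v : 'I_6) :
  reflect (exists2 j : 'I_7, bit e j & (hu j == v) || (hv j == v)) (covered e v).
Proof.
apply: (iffP hasP) => [[j]|[j ej ends_j]]; last by exists (val j); rewrite ?mem_iota7 ?ej.
by rewrite mem_iota => /andP[_ lt_j7] /andP[ej ends_j]; exists (Ordinal lt_j7).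
Qed.

Lemma H_matchingP e : reflect (forall j j' : 'I_7, j != j' -> bit e j -> bit e j' ->
  [&& hu j != hu j', hu j != hv j', hv j != hu j' & hv j != hv j']) (H_matching e).
Proof.
apply: (iffP allP) => [match_e j j' neq_jj' ej ej'|disj_e j].
  move/allP: (match_e _ (mem_iota7 j)) => /(_ _ (mem_iota7 j')).
  by rewrite ej ej' (inj_eq val_inj) (negbTE neq_jj').
rewrite mem_iota => /andP[_ lt_j7]; apply/allP => j'; rewrite mem_iota => /andP[_ lt_j'7].
case: (eqVneq j j') => [->|neq_jj'] //.
have neq_ord : Ordinal lt_j7 != Ordinal lt_j'7 by [].
case ej: (bit e j); case ej': (bit e j') => //=.
exact: (disj_e _ _ neq_ord ej ej').
Qed.

Lemma dominatingP xs e : reflect (forall j : 'I_7,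
  [|| covered e (hu j), covered e (hv j), leafy xs (hu j) | leafy xs (hv j)]) (dominating xs e).
Proof.
apply: (iffP allP) => [dom_e j|dom_e j]; first exact: dom_e (mem_iota7 j).
by rewrite mem_iota => /andP[_ lt_j7]; apply: (dom_e (Ordinal lt_j7)).
Qed.

(* The match, rather than maxn 1 _, reduces when xs`_v is a symbolic successor. *)
Definition leaf_factor (xs : seq nat) (e : bits7) (v : nat) : nat :=
  if covered e v then 1 else if nth 0 xs v is m.+1 then m.+1 else 1.

Definition leaf_choices (xs : seq nat) (e : bits7) : nat :=
  \prod_(v <- iota 0 6) leaf_factor xs e v.

Definition mm_size (xs : seq nat) (e : bits7) : nat :=
  count (bit e) (iota 0 7) + count (fun v => ~~ covered e v && leafy xs v) (iota 0 6).

Definition admissibles (xs : seq nat) : seq bits7 := [seq e <- all_bits7 | admissible xs e].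

(* For the leaf counts xs of a pendant graph (xs`_v leaves at vertex v of H), the number of
   maximal matchings and the sum of their sizes (see avm_pendant). *)
Definition num_mm (xs : seq nat) : nat := \sum_(e <- admissibles xs) leaf_choices xs e.

Definition sum_mm (xs : seq nat) : nat :=
  \sum_(e <- admissibles xs) leaf_choices xs e * mm_size xs e.

Lemma big_admissibles xs (F : bits7 -> nat) :
  \sum_(e : bits7 | admissible xs e) F e = \sum_(e <- admissibles xs) F e.
Proof. by rewrite big_filter big_mkcond big_bits7 -big_mkcond. Qed.

Section Pendant.
Variables (k : nat) (f : 'I_k -> 'I_6).
Local Notation V := ('I_6 + 'I_k)%type.
Local Notation adj := (pend_adj f).

Definition nleaves (v : 'I_6) : nat := #|[set i | f i == v]|.

Definition leaf_counts : seq nat :=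
  [:: nleaves v1; nleaves v2; nleaves v3; nleaves w1; nleaves w2; nleaves w3].

Lemma nth_leaf_counts (v : 'I_6) : nth 0 leaf_counts v = nleaves v.
Proof. by case: v => [[|[|[|[|[|[|v]]]]]] ?] //=; congr nleaves; apply: val_inj. Qed.

Lemma leafy_leaf_counts (v : 'I_6) : leafy leaf_counts v = (nleaves v != 0).
Proof. by rewrite /leafy nth_leaf_counts. Qed.

Lemma nleaves_gt0 v : (0 < nleaves v) = [exists i, f i == v].
Proof.
rewrite card_gt0; apply/set0Pn/existsP => [[i]|[i f_i]]; rewrite ?inE; first by exists i.
by exists i; rewrite inE.
Qed.

Lemma nleaves_f i : nleaves (f i) != 0.
Proof. by rewrite -lt0n nleaves_gt0; apply/existsP; exists i. Qed.

Lemma sumn_leaf_counts : sumn leaf_counts = k.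
Proof.
have -> : sumn leaf_counts = \sum_(v : 'I_6) nleaves v.
  by rewrite !big_ord_recr big_ord0 /= !add0n !addnA addn0.
rewrite -[RHS]card_ord -sum1_card (partition_big f xpredT) //=.
by apply: eq_bigr => v _; rewrite /nleaves -sum1_card; apply: eq_bigl => i; rewrite inE.
Qed.

Definition base_edge (j : 'I_7) : {set V} := [set inl (hu j); inl (hv j)].
Definition leaf_edge (v : 'I_6) (i : 'I_k) : {set V} := [set inl v; inr i].

Lemma in_base_edge x j : (x \in base_edge j) = (x == inl (hu j)) || (x == inl (hv j)).
Proof. by rewrite !inE. Qed.
Lemma in_leaf_edge x v i : (x \in leaf_edge v i) = (x == inl v) || (x == inr i).
Proof. by rewrite !inE. Qed.

Lemma inl_base_edge (y : 'I_6) j : (inl y \in base_edge j) = (y == hu j) || (y == hv j).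
Proof. by rewrite in_base_edge !(inj_eq inl_inj). Qed.
Lemma inr_base_edge i j : (inr i \in base_edge j) = false.
Proof. by rewrite in_base_edge. Qed.
Lemma inl_leaf_edge y v i : (inl y \in leaf_edge v i) = (y == v).
Proof. by rewrite in_leaf_edge (inj_eq inl_inj) orbF. Qed.
Lemma inr_leaf_edge i' v i : (inr i' \in leaf_edge v i) = (i' == i).
Proof. by rewrite in_leaf_edge (inj_eq inr_inj). Qed.

Lemma base_edge_neq_leaf_edge j v i : base_edge j != leaf_edge v i.
Proof. by apply/eqP => /setP /(_ (inr i)); rewrite inr_base_edge inr_leaf_edge eqxx. Qed.

Lemma base_edge_inj : injective base_edge.
Proof.
move=> j j' /setP eq_jj'; apply: H_ends_inj.
have := eq_jj' (inl (hu j)); have := eq_jj' (inl (hv j)).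
rewrite !inl_base_edge !eqxx orbT /= => /esym hv_j /esym hu_j.
case/andP: (H_edge_ends j) => neq_ends _.
by case/orP: hu_j => /eqP hu_j; case/orP: hv_j => /eqP hv_j;
  move: neq_ends; rewrite hu_j hv_j !eqxx //= ?orbT.
Qed.

Lemma leaf_edge_inj v i v' i' : leaf_edge v i = leaf_edge v' i' -> v = v' /\ i = i'.
Proof.
move/setP=> eq_e; have := eq_e (inl v); have := eq_e (inr i).
by rewrite !inl_leaf_edge !inr_leaf_edge !eqxx => /esym/eqP -> /esym/eqP ->.
Qed.

Lemma pend_edge_cases s : is_edge adj s ->
  (exists j, s = base_edge j) \/ (exists i, s = leaf_edge (f i) i).
Proof.
case/existsP => x /existsP [y /and3P [_ adj_xy /eqP ->]].
case: x y adj_xy => [a|i] [b|i'] //= adj_xy.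
- have [j /orP[/andP[/eqP <- /eqP <-]|/andP[/eqP <- /eqP <-]]] := H_adj_edge_ends adj_xy.
    by left; exists j.
  by left; exists j; rewrite /base_edge setUC.
- by right; exists i'; rewrite /leaf_edge (eqP adj_xy).
- by right; exists i; rewrite /leaf_edge (eqP adj_xy) setUC.
Qed.

Lemma base_edge_is_edge j : is_edge adj (base_edge j).
Proof.
apply/existsP; exists (inl (hu j)); apply/existsP; exists (inl (hv j)).
case/andP: (H_edge_ends j) => neq_ends adj_ends.
by rewrite (inj_eq inl_inj) neq_ends /= adj_ends eqxx.
Qed.

Lemma leaf_edge_is_edge i : is_edge adj (leaf_edge (f i) i).
Proof. by apply/existsP; exists (inl (f i)); apply/existsP; exists (inr i); rewrite /= !eqxx. Qed.

(* A maximal matching is coded by its edges inside H and, for each vertex v of H, the leaf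
   matched with v, if any. *)
Definition code := (bits7 * {ffun 'I_6 -> option 'I_k})%type.

Definition leaf_options (e : bits7) (v : 'I_6) : {set option 'I_k} :=
  if covered e v || (nleaves v == 0) then [set None] else Some @: [set i | f i == v].

Definition valid_code (c : code) : bool :=
  admissible leaf_counts c.1 && (c.2 \in setXn (leaf_options c.1)).

Definition decode (c : code) : {set {set V}} :=
  [set base_edge j | j in [set j : 'I_7 | bit c.1 j]] :|:
  [set leaf_edge p.1 p.2 | p in [set p | c.2 p.1 == Some p.2]].

Lemma in_decode (s : {set V}) (c : code) : reflect
  ((exists2 j : 'I_7, bit c.1 j & s = base_edge j) \/
   (exists v i, c.2 v = Some i /\ s = leaf_edge v i)) (s \in decode c).
Proof.
rewrite inE; apply: (iffP orP) => [[/imsetP[j] | /imsetP[p]] | [[j ej ->]|[v [i [cv ->]]]]].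
- by rewrite inE => ej ->; left; exists j.
- by rewrite inE => /eqP cp ->; right; exists p.1, p.2.
- by left; apply/imsetP; exists j; rewrite ?inE.
- by right; apply/imsetP; exists (v, i); rewrite // inE cv.
Qed.

Lemma base_edge_in_decode (c : code) j : (base_edge j \in decode c) = bit c.1 j.
Proof.
apply/idP/idP => [/in_decode [[j' ej' /base_edge_inj ->]//|[v [i [_ eq_e]]]]|ej].
  by move: (base_edge_neq_leaf_edge j v i); rewrite eq_e eqxx.
by apply/in_decode; left; exists j.
Qed.

Lemma leaf_edge_in_decode (c : code) v i : (leaf_edge v i \in decode c) = (c.2 v == Some i).
Proof.
apply/idP/idP => [/in_decode [[j _ eq_e]|[v' [i' [cv' /leaf_edge_inj [-> ->]]]]]|/eqP cv].
- by move: (base_edge_neq_leaf_edge j v i); rewrite eq_e eqxx.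
- by rewrite cv'.
by apply/in_decode; right; exists v, i.
Qed.

Lemma decode_inj : injective decode.
Proof.
move=> [e g] [e' g'] eq_dec.
have -> : e = e'.
  by apply: bits7_ext => j; rewrite -(base_edge_in_decode (e, g)) eq_dec base_edge_in_decode.
have eq_g v i : (g v == Some i) = (g' v == Some i).
  by rewrite -(leaf_edge_in_decode (e, g)) eq_dec leaf_edge_in_decode.
suff -> : g = g' by [].
apply/ffunP => v; case gv: (g v) => [i|]; case g'v: (g' v) => [i'|] //.
- by have := eq_g v i; rewrite gv g'v eqxx => /esym/eqP [->].
- by have := eq_g v i; rewrite gv g'v eqxx.
- by have := eq_g v i'; rewrite gv g'v eqxx.
Qed.

Lemma leaf_options_Some e v i : Some i \in leaf_options e v -> f i = v /\ ~~ covered e v.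
Proof.
rewrite /leaf_options; case: ifP => [_|/norP [not_cov _]]; first by rewrite inE.
by case/imsetP => i'; rewrite inE => /eqP f_i' [->].
Qed.

Lemma leaf_options_None e v : None \in leaf_options e v -> covered e v || (nleaves v == 0).
Proof. by rewrite /leaf_options; case: ifP => // _ /imsetP [?]. Qed.

Section Decode.
Variable c : code.
Hypothesis c_valid : valid_code c.

Let c1_admissible : admissible leaf_counts c.1. Proof. by case/andP: c_valid. Qed.
Let c2_option v : c.2 v \in leaf_options c.1 v. Proof. by case/andP: c_valid => _ /setXnP. Qed.

Lemma decode_covers (v : 'I_6) : covered c.1 v || (nleaves v != 0) ->
  exists2 t, t \in decode c & inl v \in t.
Proof.
case cov_v: (covered c.1 v) => /=; [move=> _ | move=> leafy_v].
  case/coveredP: cov_v => j ej ends_j; exists (base_edge j); first by rewrite base_edge_in_decode.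
  by rewrite inl_base_edge !(eq_sym v).
have := c2_option v; rewrite /leaf_options cov_v (negbTE leafy_v) /= => /imsetP [i _ cv].
by exists (leaf_edge v i); rewrite ?leaf_edge_in_decode ?cv ?inl_leaf_edge.
Qed.

Lemma decode_meets (s : {set V}) : is_edge adj s ->
  exists2 t, t \in decode c & exists2 x, x \in s & x \in t.
Proof.
move=> edge_s; have meet_at (x : 'I_6) : inl x \in s -> covered c.1 x || (nleaves x != 0) ->
    exists2 t, t \in decode c & exists2 x, x \in s & x \in t.
  by move=> s_x /decode_covers [t dec_t t_x]; exists t => //; exists (inl x).
case/pend_edge_cases: edge_s meet_at => [[j ->]|[i ->]] meet_at; last first.
  by apply: (meet_at (f i)); rewrite ?inl_leaf_edge ?nleaves_f ?orbT.
have u_j : inl (hu j) \in base_edge j by rewrite inl_base_edge eqxx.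
have v_j : inl (hv j) \in base_edge j by rewrite inl_base_edge eqxx orbT.
case/andP: c1_admissible => _ /dominatingP /(_ j).
rewrite !leafy_leaf_counts => /or4P [] dom_j.
- by apply: (meet_at _ u_j); rewrite dom_j.
- by apply: (meet_at _ v_j); rewrite dom_j.
- by apply: (meet_at _ u_j); rewrite dom_j orbT.
- by apply: (meet_at _ v_j); rewrite dom_j orbT.
Qed.

Lemma decode_edge s : s \in decode c -> is_edge adj s.
Proof.
case/in_decode => [[j _ ->]|[v [i [cv ->]]]]; first exact: base_edge_is_edge.
by have := c2_option v; rewrite cv => /leaf_options_Some [<- _]; apply: leaf_edge_is_edge.
Qed.

Lemma decode_disjoint s t : s \in decode c -> t \in decode c -> s != t -> [disjoint s & t].
Proof.
have base_leaf (j : 'I_7) v i :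
    bit c.1 j -> c.2 v = Some i -> [disjoint base_edge j & leaf_edge v i].
  move=> ej cv; have := c2_option v; rewrite cv => /leaf_options_Some [_ not_cov].
  apply/disjointP => x; rewrite in_base_edge => /orP [] /eqP ->; rewrite inl_leaf_edge;
  apply: contra not_cov => /eqP <-; by apply/coveredP; exists j; rewrite // eqxx ?orbT.
case/in_decode => [[j ej ->]|[v [i [cv ->]]]];
  case/in_decode => [[j' ej' ->]|[v' [i' [cv' ->]]]] neq_st.
- have neq_jj' : j != j' by apply: contraNneq neq_st => ->.
  case/andP: c1_admissible => /H_matchingP /(_ _ _ neq_jj' ej ej') /and4P [d1 d2 d3 d4] _.
  apply/disjointP => x; rewrite in_base_edge => /orP [] /eqP ->;
  by rewrite inl_base_edge negb_or ?d1 ?d2 ?d3 ?d4.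
- exact: base_leaf.
- by rewrite disjoint_sym; apply: base_leaf.
- apply/disjointP => x; rewrite in_leaf_edge => /orP [] /eqP ->.
    rewrite inl_leaf_edge; apply: contra neq_st => /eqP eq_vv'.
    by move: cv'; rewrite -eq_vv' cv => -[->].
  rewrite inr_leaf_edge; apply: contra neq_st => /eqP eq_ii'.
  have := c2_option v; have := c2_option v'; rewrite cv cv'.
  by move=> /leaf_options_Some [f_i' _] /leaf_options_Some [f_i _]; rewrite -f_i -f_i' eq_ii'.
Qed.

Lemma decode_matching : matching adj (decode c).
Proof. by apply/matchingP; split=> [s|s t]; [apply: decode_edge | apply: decode_disjoint]. Qed.

Lemma decode_maximal : maximal_matching adj (decode c).
Proof.
apply/maximal_matchingP; split=> [|M' /properP [sub_M' [s M'_s notdec_s]]].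
  exact: decode_matching.
apply/negP => /matchingP [edges disj].
have [t dec_t [x s_x t_x]] := decode_meets (edges s M'_s).
have neq_st : s != t by apply: contraNneq notdec_s => ->.
by move/disjointP: (disj s t M'_s (subsetP sub_M' _ dec_t) neq_st) => /(_ x s_x); rewrite t_x.
Qed.

End Decode.

Section Encode.
Variable M : {set {set V}}.
Hypothesis M_max : maximal_matching adj M.

Let M_matching : matching adj M. Proof. by case/maximal_matchingP: M_max. Qed.
Let M_edge s : s \in M -> is_edge adj s.
Proof. by case/matchingP: M_matching => edges _; apply: edges. Qed.

Definition encode_bits : bits7 :=
  (base_edge (@Ordinal 7 0 isT) \in M, base_edge (@Ordinal 7 1 isT) \in M,
   base_edge (@Ordinal 7 2 isT) \in M, base_edge (@Ordinal 7 3 isT) \in M,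
   base_edge (@Ordinal 7 4 isT) \in M, base_edge (@Ordinal 7 5 isT) \in M,
   base_edge (@Ordinal 7 6 isT) \in M).

Definition encode_leaves : {ffun 'I_6 -> option 'I_k} :=
  [ffun v => [pick i | leaf_edge v i \in M]].

Definition encode : code := (encode_bits, encode_leaves).

Lemma bit_encode (j : 'I_7) : bit encode_bits j = (base_edge j \in M).
Proof.
by case: j => [[|[|[|[|[|[|[|j]]]]]]] ?] //=; congr (base_edge _ \in M); apply: val_inj.
Qed.

Lemma encode_leaves_Some v i : encode_leaves v = Some i -> leaf_edge v i \in M.
Proof. by rewrite ffunE; case: pickP => // i' M_i' [<-]. Qed.

Lemma encode_leaves_None v i : encode_leaves v = None -> leaf_edge v i \notin M.
Proof. by rewrite ffunE; case: pickP => // notM _; rewrite notM. Qed.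

Lemma encode_leaves_f v i : encode_leaves v = Some i -> f i = v.
Proof.
move/encode_leaves_Some/M_edge/pend_edge_cases => [[j eq_e]|[i' /leaf_edge_inj [-> ->]]] //.
by move: (base_edge_neq_leaf_edge j v i); rewrite eq_e eqxx.
Qed.

Lemma matched_vertex t (y : 'I_6) : t \in M -> inl y \in t ->
  covered encode_bits y || (encode_leaves y != None).
Proof.
move=> M_t; case/pend_edge_cases: (M_edge M_t) => [[j eq_t]|[i eq_t]]; rewrite eq_t.
  rewrite inl_base_edge => ends_j; apply/orP; left; apply/coveredP; exists j.
    by rewrite bit_encode -eq_t.
  by rewrite !(eq_sym _ y).
rewrite inl_leaf_edge => /eqP eq_y; apply/orP; right.
by case e_y: (encode_leaves y) => //; have := encode_leaves_None i e_y; rewrite eq_y -eq_t M_t.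
Qed.

Lemma encode_H_matching : H_matching encode_bits.
Proof.
apply/H_matchingP => j j' neq_jj'; rewrite !bit_encode => M_j M_j'.
have neq_e : base_edge j != base_edge j' by apply: contra neq_jj' => /eqP /base_edge_inj ->.
case/matchingP: M_matching => _ /(_ _ _ M_j M_j' neq_e) /disjointP disj.
apply/and4P; split; apply/negP => /eqP eq_ends.
- by move: (disj (inl (hu j))); rewrite !inl_base_edge eq_ends !eqxx ?orbT => /(_ isT).
- by move: (disj (inl (hu j))); rewrite !inl_base_edge eq_ends !eqxx ?orbT => /(_ isT).
- by move: (disj (inl (hv j))); rewrite !inl_base_edge eq_ends !eqxx ?orbT => /(_ isT).
- by move: (disj (inl (hv j))); rewrite !inl_base_edge eq_ends !eqxx ?orbT => /(_ isT).
Qed.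

Lemma encode_dominating : dominating leaf_counts encode_bits.
Proof.
apply/dominatingP => j; rewrite !leafy_leaf_counts.
case cov_u: (covered _ (hu j)); case cov_v: (covered _ (hv j)) => //=.
rewrite -negb_and; apply/negP => /andP [leafless_u leafless_v].
have unmatched (y : 'I_6) t : t \in M -> covered encode_bits y = false -> nleaves y == 0 ->
    inl y \notin t.
  move=> M_t cov_y leafless_y; apply/negP => /(matched_vertex M_t); rewrite cov_y /=.
  case e_y: (encode_leaves y) => [i|] //= _.
  by move: leafless_y; rewrite -(encode_leaves_f e_y) (negbTE (nleaves_f i)).
have M_j : base_edge j \in M.
  apply: (maximal_free_edge M_max (base_edge_is_edge j)) => t M_t.
  by apply/disjointP => x; rewrite in_base_edge => /orP [] /eqP ->; apply: unmatched.
suff : covered encode_bits (hu j) by rewrite cov_u.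
by apply/coveredP; exists j; rewrite ?bit_encode ?eqxx.
Qed.

Lemma encode_leaf_options v : encode_leaves v \in leaf_options encode_bits v.
Proof.
rewrite /leaf_options; case: ifP => [blocked_v|/norP [cov_v leafy_v]].
  rewrite inE; apply/eqP; case e_v: (encode_leaves v) => [i|] //.
  have f_i := encode_leaves_f e_v; have M_vi := encode_leaves_Some e_v.
  move: blocked_v; rewrite -f_i (negbTE (nleaves_f i)) orbF f_i => /coveredP [j ej ends_j].
  rewrite bit_encode in ej.
  have v_j : inl v \in base_edge j by rewrite inl_base_edge !(eq_sym v).
  have := matching_uniq M_matching ej M_vi v_j; rewrite inl_leaf_edge eqxx => /(_ isT) eq_e.
  by move: (base_edge_neq_leaf_edge j v i); rewrite eq_e eqxx.
case e_v: (encode_leaves v) => [i|].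
  by apply/imsetP; exists i; rewrite // inE (encode_leaves_f e_v).
move: leafy_v; rewrite -lt0n nleaves_gt0 => /existsP [i0 /eqP f_i0].
have notM_i0 := encode_leaves_None i0 e_v.
suff : leaf_edge v i0 \in M by rewrite (negbTE notM_i0).
rewrite -{1}f_i0; apply: (maximal_free_edge M_max (leaf_edge_is_edge i0)) => t M_t.
apply/disjointP => x; rewrite in_leaf_edge => /orP [] /eqP ->.
  by apply/negP => /(matched_vertex M_t); rewrite f_i0 (negbTE cov_v) e_v.
apply/negP => t_i0; case/pend_edge_cases: (M_edge M_t) => [[j eq_t]|[i eq_t]].
  by move: t_i0; rewrite eq_t inr_base_edge.
move: t_i0 notM_i0; rewrite eq_t inr_leaf_edge => /eqP eq_i0.
by rewrite -f_i0 eq_i0 -eq_t M_t.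
Qed.

Lemma encode_valid : valid_code encode.
Proof.
rewrite /valid_code /admissible encode_H_matching encode_dominating /=.
by apply/setXnP => v; apply: encode_leaf_options.
Qed.

Lemma encodeK : decode encode = M.
Proof.
apply/setP => s; apply/idP/idP.
  case/in_decode => [[j ej ->]|[v [i [e_v ->]]]]; last exact: encode_leaves_Some.
  by rewrite -bit_encode.
move=> M_s; case/pend_edge_cases: (M_edge M_s) => [[j eq_s]|[i eq_s]]; rewrite eq_s.
  by rewrite base_edge_in_decode bit_encode -eq_s.
rewrite leaf_edge_in_decode /=.
case e_fi: (encode_leaves (f i)) => [i'|]; last first.
  by move: (encode_leaves_None i e_fi); rewrite -eq_s M_s.
have s_fi : inl (f i) \in s by rewrite eq_s inl_leaf_edge.
have := matching_uniq M_matching M_s (encode_leaves_Some e_fi) s_fi.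
rewrite inl_leaf_edge eqxx => /(_ isT).
by rewrite eq_s => /leaf_edge_inj [_ ->].
Qed.

End Encode.

Lemma card_ord_count n (P : pred nat) : #|[set j : 'I_n | P j]| = count P (iota 0 n).
Proof.
rewrite cardsE cardE /enum_mem size_filter -enumT -val_enum_ord count_map.
exact: eq_count.
Qed.

Lemma card_decode c :
  #|decode c| = count (bit c.1) (iota 0 7) + #|[set v | c.2 v != None]|.
Proof.
rewrite /decode; have disj : [disjoint
    [set base_edge j | j in [set j : 'I_7 | bit c.1 j]] &
    [set leaf_edge p.1 p.2 | p in [set p | c.2 p.1 == Some p.2]]].
  apply/disjointP => x /imsetP [j _ ->]; apply/negP => /imsetP [p _ eq_e].
  by move: (base_edge_neq_leaf_edge j p.1 p.2); rewrite eq_e eqxx.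
move: disj; rewrite -(leq_card_setU _ _).2 => /eqP ->.
rewrite card_imset; last exact: base_edge_inj.
rewrite card_ord_count; congr addn.
rewrite card_in_imset; last by move=> [v i] [v' i'] _ _ /= /leaf_edge_inj [-> ->].
have <- : fst @: [set p | c.2 p.1 == Some p.2] = [set v | c.2 v != None].
  apply/setP => v; rewrite inE; apply/imsetP/idP => [[p]|].
    by rewrite inE => /eqP c_p ->; rewrite c_p.
  by case c_v: (c.2 v) => [i|] // _; exists (v, i); rewrite // inE c_v.
rewrite card_in_imset // => -[v i] [v' i']; rewrite !inE /= => /eqP c_v /eqP + eq_v.
by rewrite -eq_v c_v => -[->].
Qed.

Lemma big_maximal_matching (F : {set {set V}} -> nat) :
  \sum_(M | maximal_matching adj M) F M = \sum_(c | valid_code c) F (decode c).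
Proof.
have max_img : [set M | maximal_matching adj M] = decode @: [set c | valid_code c].
  apply/setP => M; rewrite inE; apply/idP/imsetP => [M_max|[c]].
    by exists (encode M); rewrite ?inE ?encode_valid ?encodeK.
  by rewrite inE => c_valid ->; apply: decode_maximal.
rewrite (eq_bigl [in [set M | maximal_matching adj M]]) => [|M]; last by rewrite inE.
rewrite max_img big_imset => [|? ? _ _]; last exact: decode_inj.
by apply: eq_bigl => c; rewrite inE.
Qed.

Lemma card_leaf_options e v : #|leaf_options e v| = leaf_factor leaf_counts e v.
Proof.
rewrite /leaf_options /leaf_factor nth_leaf_counts; case: (covered e v) => /=.
  by rewrite cards1.
case: (nleaves v =P 0) => [->|leafy_v] /=; first by rewrite cards1.
rewrite card_imset; last by move=> ? ? [].
by rewrite -/(nleaves v); case: (nleaves v) leafy_v.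
Qed.

Lemma card_leaf_assignments e : #|setXn (leaf_options e)| = leaf_choices leaf_counts e.
Proof.
rewrite cardsXn /leaf_choices -/(index_iota 0 6) big_mkord.
by apply: eq_bigr => v _; apply: card_leaf_options.
Qed.

Lemma big_valid_code (G : code -> nat) (w : bits7 -> nat) :
  (forall c, valid_code c -> G c = w c.1) ->
  \sum_(c | valid_code c) G c =
  \sum_(e <- admissibles leaf_counts) leaf_choices leaf_counts e * w e.
Proof.
move=> G_w; rewrite -big_admissibles.
transitivity (\sum_(e | admissible leaf_counts e) \sum_(g in setXn (leaf_options e)) w e).
  by rewrite pair_big_dep; apply: eq_big => [[e g]|[e g] /G_w].
by apply: eq_bigr => e _; rewrite sum_nat_const card_leaf_assignments.
Qed.

Lemma sum_card_maximal_matching : \sum_(M | maximal_matching adj M) #|M| = sum_mm leaf_counts.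
Proof.
rewrite big_maximal_matching (big_valid_code (w := mm_size leaf_counts)) // => -[e g] /andP [_].
move=> /setXnP g_opt; rewrite card_decode /mm_size; congr addn.
rewrite -card_ord_count; apply: eq_card => v; rewrite !inE leafy_leaf_counts /=.
case g_v: (g v) (g_opt v) => [i|] /=; first by case/leaf_options_Some => <- ->; rewrite nleaves_f.
by move/leaf_options_None; case: (covered e v) => //= /eqP ->.
Qed.

Lemma card_maximal_matching : #|[set M | maximal_matching adj M]| = num_mm leaf_counts.
Proof.
rewrite -sum1_card (eq_bigl (maximal_matching adj)) => [|M]; last by rewrite inE.
rewrite big_maximal_matching (big_valid_code (w := fun=> 1)) //.
by apply: eq_bigr => e _; rewrite muln1.
Qed.

Lemma avm_pendant : avm adj = ((sum_mm leaf_counts)%:R / (num_mm leaf_counts)%:R)%R.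
Proof. by rewrite /avm sum_card_maximal_matching card_maximal_matching. Qed.

Lemma num_mm_gt0 : 0 < num_mm leaf_counts.
Proof.
have [M M_max] := maximal_matching_exists adj.
by rewrite -card_maximal_matching card_gt0; apply/set0Pn; exists M; rewrite inE.
Qed.

End Pendant.

(* Admissibility only depends on which entries of xs vanish, so vm_compute decides it even
   when the entries are symbolic successors. *)
Ltac eval_mm :=
  rewrite /sum_mm /num_mm;
  match goal with |- context [admissibles ?xs] =>
    let l := eval vm_compute in (admissibles xs) in
    rewrite (_ : admissibles xs = l); last by vm_compute
  end;
  rewrite /leaf_choices /mm_size /leaf_factor !unlock /=.

Definition T1_33_counts (k : nat) : seq nat := [:: 0; 0; k; 0; 0; 0].

Lemma leaf_counts_T1_33 k : leaf_counts (fun _ : 'I_k => v3) = T1_33_counts k.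
Proof.
have nleaves_const u : nleaves (fun _ : 'I_k => v3) u = if v3 == u then k else 0.
  by rewrite /nleaves; case: eqP => _; rewrite ?cardsT ?cards0 ?card_ord.
by rewrite /leaf_counts !nleaves_const.
Qed.

Lemma sum_mm_T1_33 k : 0 < k -> sum_mm (T1_33_counts k) = 9 * k + 15.
Proof. by case: k => // k _; rewrite /T1_33_counts; eval_mm; ring. Qed.

Lemma num_mm_T1_33 k : 0 < k -> num_mm (T1_33_counts k) = 3 * k + 7.
Proof. by case: k => // k _; rewrite /T1_33_counts; eval_mm; ring. Qed.

(* The average size of a maximal matching for leaf counts xs exceeds that of
   T1_33 (sumn xs + 6), cross-multiplied. *)
Definition gt_T1_33 (xs : seq nat) : Prop :=
  (9 * sumn xs + 15) * num_mm xs < sum_mm xs * (3 * sumn xs + 7).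

Lemma ltn_of_eq_addS a b d : b = a + d.+1 -> a < b.
Proof. by move=> ->; rewrite addnS ltnS leq_addr. Qed.

(* In the lemmas below bi.+1 is the number of leaves at vertex i, and d + 1 is the difference
   of the two sides, a polynomial in the bi with nonnegative coefficients. *)
Ltac certify d := rewrite /gt_T1_33; eval_mm; apply: (@ltn_of_eq_addS _ _ d); ring.

Lemma gt_T1_33_w3 b2 b5 : gt_T1_33 [:: 0; 0; b2.+1; 0; 0; b5.+1].
Proof.
certify (
  26 + 28*b5 + 3*b5*b5 + 22*b2 + 25*b2*b5 + 3*b2*b5*b5 + 3*b2*b2 + 3*b2*b2*b5).
Qed.

Lemma gt_T1_33_w2 b2 b4 : gt_T1_33 [:: 0; 0; b2.+1; 0; b4.+1; 0].
Proof.
certify (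
  26 + 28*b4 + 3*b4*b4 + 22*b2 + 25*b2*b4 + 3*b2*b4*b4 + 3*b2*b2 + 3*b2*b2*b4).
Qed.

Lemma gt_T1_33_w2_w3 b2 b4 b5 : gt_T1_33 [:: 0; 0; b2.+1; 0; b4.+1; b5.+1].
Proof.
certify (
  115 + 96*b5 + 9*b5*b5 + 96*b4 + 74*b4*b5 + 6*b4*b5*b5 + 9*b4*b4 + 6*b4*b4*b5 + 78*b2 +
  62*b2*b5 + 6*b2*b5*b5 + 62*b2*b4 + 40*b2*b4*b5 + 3*b2*b4*b5*b5 + 6*b2*b4*b4 +
  3*b2*b4*b4*b5 + 9*b2*b2 + 6*b2*b2*b5 + 6*b2*b2*b4 + 3*b2*b2*b4*b5).
Qed.

Lemma gt_T1_33_v2 b1 b2 : gt_T1_33 [:: 0; b1.+1; b2.+1; 0; 0; 0].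
Proof. certify (44 + 27*b2 + 33*b1 + 18*b1*b2). Qed.

Lemma gt_T1_33_v2_w3 b1 b2 b5 : gt_T1_33 [:: 0; b1.+1; b2.+1; 0; 0; b5.+1].
Proof.
certify (
  111 + 87*b5 + 9*b5*b5 + 71*b2 + 59*b2*b5 + 6*b2*b5*b5 + 6*b2*b2 + 6*b2*b2*b5 + 83*b1 +
  65*b1*b5 + 6*b1*b5*b5 + 46*b1*b2 + 37*b1*b2*b5 + 3*b1*b2*b5*b5 + 3*b1*b2*b2 +
  3*b1*b2*b2*b5 + 6*b1*b1 + 6*b1*b1*b5 + 3*b1*b1*b2 + 3*b1*b1*b2*b5).
Qed.

Lemma gt_T1_33_v2_w2 b1 b2 b4 : gt_T1_33 [:: 0; b1.+1; b2.+1; 0; b4.+1; 0].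
Proof.
certify (
  111 + 87*b4 + 9*b4*b4 + 71*b2 + 59*b2*b4 + 6*b2*b4*b4 + 6*b2*b2 + 6*b2*b2*b4 + 83*b1 +
  65*b1*b4 + 6*b1*b4*b4 + 46*b1*b2 + 37*b1*b2*b4 + 3*b1*b2*b4*b4 + 3*b1*b2*b2 +
  3*b1*b2*b2*b4 + 6*b1*b1 + 6*b1*b1*b4 + 3*b1*b1*b2 + 3*b1*b1*b2*b4).
Qed.

Lemma gt_T1_33_v2_w2_w3 b1 b2 b4 b5 : gt_T1_33 [:: 0; b1.+1; b2.+1; 0; b4.+1; b5.+1].
Proof.
certify (
  309 + 242*b5 + 24*b5*b5 + 242*b4 + 179*b4*b5 + 15*b4*b5*b5 + 24*b4*b4 + 15*b4*b4*b5 +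
  192*b2 + 142*b2*b5 + 12*b2*b5*b5 + 142*b2*b4 + 89*b2*b4*b5 + 6*b2*b4*b5*b5 + 12*b2*b4*b4 +
  6*b2*b4*b4*b5 + 18*b2*b2 + 12*b2*b2*b5 + 12*b2*b2*b4 + 6*b2*b2*b4*b5 + 223*b1 + 170*b1*b5 +
  15*b1*b5*b5 + 170*b1*b4 + 120*b1*b4*b5 + 9*b1*b4*b5*b5 + 15*b1*b4*b4 + 9*b1*b4*b4*b5 +
  120*b1*b2 + 86*b1*b2*b5 + 6*b1*b2*b5*b5 + 86*b1*b2*b4 + 52*b1*b2*b4*b5 + 3*b1*b2*b4*b5*b5 +
  6*b1*b2*b4*b4 + 3*b1*b2*b4*b4*b5 + 9*b1*b2*b2 + 6*b1*b2*b2*b5 + 6*b1*b2*b2*b4 +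
  3*b1*b2*b2*b4*b5 + 21*b1*b1 + 15*b1*b1*b5 + 15*b1*b1*b4 + 9*b1*b1*b4*b5 + 9*b1*b1*b2 +
  6*b1*b1*b2*b5 + 6*b1*b1*b2*b4 + 3*b1*b1*b2*b4*b5).
Qed.

Lemma gt_T1_33_v1 b0 b2 : gt_T1_33 [:: b0.+1; 0; b2.+1; 0; 0; 0].
Proof. certify (44 + 27*b2 + 33*b0 + 18*b0*b2). Qed.

Lemma gt_T1_33_v1_w3 b0 b2 b5 : gt_T1_33 [:: b0.+1; 0; b2.+1; 0; 0; b5.+1].
Proof.
certify (
  111 + 87*b5 + 9*b5*b5 + 71*b2 + 59*b2*b5 + 6*b2*b5*b5 + 6*b2*b2 + 6*b2*b2*b5 + 83*b0 +
  65*b0*b5 + 6*b0*b5*b5 + 46*b0*b2 + 37*b0*b2*b5 + 3*b0*b2*b5*b5 + 3*b0*b2*b2 +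
  3*b0*b2*b2*b5 + 6*b0*b0 + 6*b0*b0*b5 + 3*b0*b0*b2 + 3*b0*b0*b2*b5).
Qed.

Lemma gt_T1_33_v1_w2 b0 b2 b4 : gt_T1_33 [:: b0.+1; 0; b2.+1; 0; b4.+1; 0].
Proof.
certify (
  111 + 87*b4 + 9*b4*b4 + 71*b2 + 59*b2*b4 + 6*b2*b4*b4 + 6*b2*b2 + 6*b2*b2*b4 + 83*b0 +
  65*b0*b4 + 6*b0*b4*b4 + 46*b0*b2 + 37*b0*b2*b4 + 3*b0*b2*b4*b4 + 3*b0*b2*b2 +
  3*b0*b2*b2*b4 + 6*b0*b0 + 6*b0*b0*b4 + 3*b0*b0*b2 + 3*b0*b0*b2*b4).
Qed.

Lemma gt_T1_33_v1_w2_w3 b0 b2 b4 b5 : gt_T1_33 [:: b0.+1; 0; b2.+1; 0; b4.+1; b5.+1].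
Proof.
certify (
  309 + 242*b5 + 24*b5*b5 + 242*b4 + 179*b4*b5 + 15*b4*b5*b5 + 24*b4*b4 + 15*b4*b4*b5 +
  192*b2 + 142*b2*b5 + 12*b2*b5*b5 + 142*b2*b4 + 89*b2*b4*b5 + 6*b2*b4*b5*b5 + 12*b2*b4*b4 +
  6*b2*b4*b4*b5 + 18*b2*b2 + 12*b2*b2*b5 + 12*b2*b2*b4 + 6*b2*b2*b4*b5 + 223*b0 + 170*b0*b5 +
  15*b0*b5*b5 + 170*b0*b4 + 120*b0*b4*b5 + 9*b0*b4*b5*b5 + 15*b0*b4*b4 + 9*b0*b4*b4*b5 +
  120*b0*b2 + 86*b0*b2*b5 + 6*b0*b2*b5*b5 + 86*b0*b2*b4 + 52*b0*b2*b4*b5 + 3*b0*b2*b4*b5*b5 +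
  6*b0*b2*b4*b4 + 3*b0*b2*b4*b4*b5 + 9*b0*b2*b2 + 6*b0*b2*b2*b5 + 6*b0*b2*b2*b4 +
  3*b0*b2*b2*b4*b5 + 21*b0*b0 + 15*b0*b0*b5 + 15*b0*b0*b4 + 9*b0*b0*b4*b5 + 9*b0*b0*b2 +
  6*b0*b0*b2*b5 + 6*b0*b0*b2*b4 + 3*b0*b0*b2*b4*b5).
Qed.

Lemma gt_T1_33_v1_v2 b0 b1 b2 : gt_T1_33 [:: b0.+1; b1.+1; b2.+1; 0; 0; 0].
Proof.
certify (
  147 + 96*b2 + 9*b2*b2 + 118*b1 + 87*b1*b2 + 9*b1*b2*b2 + 12*b1*b1 + 9*b1*b1*b2 + 118*b0 +
  87*b0*b2 + 9*b0*b2*b2 + 112*b0*b1 + 96*b0*b1*b2 + 9*b0*b1*b2*b2 + 12*b0*b1*b1 +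
  9*b0*b1*b1*b2 + 12*b0*b0 + 9*b0*b0*b2 + 12*b0*b0*b1 + 9*b0*b0*b1*b2).
Qed.

Lemma gt_T1_33_v1_v2_w3 b0 b1 b2 b5 : gt_T1_33 [:: b0.+1; b1.+1; b2.+1; 0; 0; b5.+1].
Proof.
certify (
  266 + 177*b5 + 18*b5*b5 + 158*b2 + 102*b2*b5 + 9*b2*b5*b5 + 15*b2*b2 + 9*b2*b2*b5 + 208*b1 +
  133*b1*b5 + 12*b1*b5*b5 + 130*b1*b2 + 77*b1*b2*b5 + 6*b1*b2*b5*b5 + 12*b1*b2*b2 +
  6*b1*b2*b2*b5 + 21*b1*b1 + 12*b1*b1*b5 + 12*b1*b1*b2 + 6*b1*b1*b2*b5 + 208*b0 + 133*b0*b5 +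
  12*b0*b5*b5 + 130*b0*b2 + 77*b0*b2*b5 + 6*b0*b2*b5*b5 + 12*b0*b2*b2 + 6*b0*b2*b2*b5 +
  186*b0*b1 + 111*b0*b1*b5 + 9*b0*b1*b5*b5 + 136*b0*b1*b2 + 77*b0*b1*b2*b5 +
  6*b0*b1*b2*b5*b5 + 12*b0*b1*b2*b2 + 6*b0*b1*b2*b2*b5 + 18*b0*b1*b1 + 9*b0*b1*b1*b5 +
  12*b0*b1*b1*b2 + 6*b0*b1*b1*b2*b5 + 21*b0*b0 + 12*b0*b0*b5 + 12*b0*b0*b2 + 6*b0*b0*b2*b5 +
  18*b0*b0*b1 + 9*b0*b0*b1*b5 + 12*b0*b0*b1*b2 + 6*b0*b0*b1*b2*b5).
Qed.

Lemma gt_T1_33_v1_v2_w2 b0 b1 b2 b4 : gt_T1_33 [:: b0.+1; b1.+1; b2.+1; 0; b4.+1; 0].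
Proof.
certify (
  266 + 177*b4 + 18*b4*b4 + 158*b2 + 102*b2*b4 + 9*b2*b4*b4 + 15*b2*b2 + 9*b2*b2*b4 + 208*b1 +
  133*b1*b4 + 12*b1*b4*b4 + 130*b1*b2 + 77*b1*b2*b4 + 6*b1*b2*b4*b4 + 12*b1*b2*b2 +
  6*b1*b2*b2*b4 + 21*b1*b1 + 12*b1*b1*b4 + 12*b1*b1*b2 + 6*b1*b1*b2*b4 + 208*b0 + 133*b0*b4 +
  12*b0*b4*b4 + 130*b0*b2 + 77*b0*b2*b4 + 6*b0*b2*b4*b4 + 12*b0*b2*b2 + 6*b0*b2*b2*b4 +
  186*b0*b1 + 111*b0*b1*b4 + 9*b0*b1*b4*b4 + 136*b0*b1*b2 + 77*b0*b1*b2*b4 +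
  6*b0*b1*b2*b4*b4 + 12*b0*b1*b2*b2 + 6*b0*b1*b2*b2*b4 + 18*b0*b1*b1 + 9*b0*b1*b1*b4 +
  12*b0*b1*b1*b2 + 6*b0*b1*b1*b2*b4 + 21*b0*b0 + 12*b0*b0*b4 + 12*b0*b0*b2 + 6*b0*b0*b2*b4 +
  18*b0*b0*b1 + 9*b0*b0*b1*b4 + 12*b0*b0*b1*b2 + 6*b0*b0*b1*b2*b4).
Qed.

Lemma gt_T1_33_v1_v2_w2_w3 b0 b1 b2 b4 b5 : gt_T1_33 [:: b0.+1; b1.+1; b2.+1; 0; b4.+1; b5.+1].
Proof.
certify (
  559 + 406*b5 + 39*b5*b5 + 406*b4 + 290*b4*b5 + 24*b4*b5*b5 + 39*b4*b4 + 24*b4*b4*b5 +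
  328*b2 + 225*b2*b5 + 18*b2*b5*b5 + 225*b2*b4 + 138*b2*b4*b5 + 9*b2*b4*b5*b5 + 18*b2*b4*b4 +
  9*b2*b4*b4*b5 + 30*b2*b2 + 18*b2*b2*b5 + 18*b2*b2*b4 + 9*b2*b2*b4*b5 + 406*b1 + 284*b1*b5 +
  24*b1*b5*b5 + 284*b1*b4 + 200*b1*b4*b5 + 15*b1*b4*b5*b5 + 24*b1*b4*b4 + 15*b1*b4*b4*b5 +
  247*b1*b2 + 163*b1*b2*b5 + 12*b1*b2*b5*b5 + 163*b1*b2*b4 + 98*b1*b2*b4*b5 +
  6*b1*b2*b4*b5*b5 + 12*b1*b2*b4*b4 + 6*b1*b2*b4*b4*b5 + 21*b1*b2*b2 + 12*b1*b2*b2*b5 +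
  12*b1*b2*b2*b4 + 6*b1*b2*b2*b4*b5 + 39*b1*b1 + 24*b1*b1*b5 + 24*b1*b1*b4 + 15*b1*b1*b4*b5 +
  21*b1*b1*b2 + 12*b1*b1*b2*b5 + 12*b1*b1*b2*b4 + 6*b1*b1*b2*b4*b5 + 406*b0 + 284*b0*b5 +
  24*b0*b5*b5 + 284*b0*b4 + 200*b0*b4*b5 + 15*b0*b4*b5*b5 + 24*b0*b4*b4 + 15*b0*b4*b4*b5 +
  247*b0*b2 + 163*b0*b2*b5 + 12*b0*b2*b5*b5 + 163*b0*b2*b4 + 98*b0*b2*b4*b5 +
  6*b0*b2*b4*b5*b5 + 12*b0*b2*b4*b4 + 6*b0*b2*b4*b4*b5 + 21*b0*b2*b2 + 12*b0*b2*b2*b5 +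
  12*b0*b2*b2*b4 + 6*b0*b2*b2*b4*b5 + 334*b0*b1 + 228*b0*b1*b5 + 18*b0*b1*b5*b5 +
  228*b0*b1*b4 + 166*b0*b1*b4*b5 + 12*b0*b1*b4*b5*b5 + 18*b0*b1*b4*b4 + 12*b0*b1*b4*b4*b5 +
  250*b0*b1*b2 + 163*b0*b1*b2*b5 + 12*b0*b1*b2*b5*b5 + 163*b0*b1*b2*b4 + 98*b0*b1*b2*b4*b5 +
  6*b0*b1*b2*b4*b5*b5 + 12*b0*b1*b2*b4*b4 + 6*b0*b1*b2*b4*b4*b5 + 21*b0*b1*b2*b2 +
  12*b0*b1*b2*b2*b5 + 12*b0*b1*b2*b2*b4 + 6*b0*b1*b2*b2*b4*b5 + 30*b0*b1*b1 + 18*b0*b1*b1*b5 +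
  18*b0*b1*b1*b4 + 12*b0*b1*b1*b4*b5 + 21*b0*b1*b1*b2 + 12*b0*b1*b1*b2*b5 +
  12*b0*b1*b1*b2*b4 + 6*b0*b1*b1*b2*b4*b5 + 39*b0*b0 + 24*b0*b0*b5 + 24*b0*b0*b4 +
  15*b0*b0*b4*b5 + 21*b0*b0*b2 + 12*b0*b0*b2*b5 + 12*b0*b0*b2*b4 + 6*b0*b0*b2*b4*b5 +
  30*b0*b0*b1 + 18*b0*b0*b1*b5 + 18*b0*b0*b1*b4 + 12*b0*b0*b1*b4*b5 + 21*b0*b0*b1*b2 +
  12*b0*b0*b1*b2*b5 + 12*b0*b0*b1*b2*b4 + 6*b0*b0*b1*b2*b4*b5).
Qed.

Lemma gt_T1_33_of_leafy x0 x1 x2 x4 x5 : 0 < x2 -> 0 < x0 + x1 + x4 + x5 ->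
  gt_T1_33 [:: x0; x1; x2; 0; x4; x5].
Proof.
case: x2 => // b2 _.
case: x0 => [|b0]; case: x1 => [|b1]; case: x4 => [|b4]; case: x5 => [|b5] // _.
- exact: gt_T1_33_w3.
- exact: gt_T1_33_w2.
- exact: gt_T1_33_w2_w3.
- exact: gt_T1_33_v2.
- exact: gt_T1_33_v2_w3.
- exact: gt_T1_33_v2_w2.
- exact: gt_T1_33_v2_w2_w3.
- exact: gt_T1_33_v1.
- exact: gt_T1_33_v1_w3.
- exact: gt_T1_33_v1_w2.
- exact: gt_T1_33_v1_w2_w3.
- exact: gt_T1_33_v1_v2.
- exact: gt_T1_33_v1_v2_w3.
- exact: gt_T1_33_v1_v2_w2.
- exact: gt_T1_33_v1_v2_w2_w3.
Qed.

Lemma ltr_ratio_nat (a b c d : nat) : 0 < b -> 0 < d -> a * d < c * b ->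
  (a%:R / b%:R < c%:R / d%:R :> rat)%R.
Proof.
move=> b_gt0 d_gt0 lt_ad_cb.
by rewrite ltr_pdivrMr ?ltr0n // mulrAC ltr_pdivlMr ?ltr0n // -!natrM ltr_nat.
Qed.

Lemma avm_T1_33_lt k xs : sumn xs = k -> 0 < k -> 0 < num_mm xs -> gt_T1_33 xs ->
  ((sum_mm (T1_33_counts k))%:R / (num_mm (T1_33_counts k))%:R <
   (sum_mm xs)%:R / (num_mm xs)%:R :> rat)%R.
Proof.
move=> <- k_gt0 num_gt0 gt_T1_33_xs.
by rewrite sum_mm_T1_33 // num_mm_T1_33 //; apply: ltr_ratio_nat; rewrite ?addn_gt0 ?orbT.
Qed.

Theorem lemma4p4 (n : nat) (hn : (7 <= n)%N) (f : 'I_(n - 6) -> 'I_6)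
  (hv3 : exists i, f i = v3)
  (hw1 : forall i, f i != w1)
  (hother : exists i, f i \in [:: v1; v2; w2; w3]) :
  (avm (T1_33 n) < avm (pend_adj f))%R.
Proof.
have leafy_v3 : 0 < nleaves f v3.
  by rewrite nleaves_gt0; case: hv3 => i f_i; apply/existsP; exists i; rewrite f_i.
have leafless_w1 : nleaves f w1 = 0.
  by apply/eqP; rewrite -leqn0 leqNgt nleaves_gt0 negb_exists; apply/forallP.
have leafy_other : 0 < nleaves f v1 + nleaves f v2 + nleaves f w2 + nleaves f w3.
  case: hother => i; rewrite !inE => /or4P [] /eqP f_i;
  by move: (nleaves_f f i); rewrite f_i -lt0n => leafy; rewrite !addn_gt0 leafy ?orbT.
rewrite /T1_33 !avm_pendant leaf_counts_T1_33.
apply: avm_T1_33_lt (sumn_leaf_counts f) _ (num_mm_gt0 f) _; first by rewrite subn_gt0.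
by rewrite /leaf_counts leafless_w1; apply: gt_T1_33_of_leafy.
Qed.
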